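(* Let $d\ge2$ and let $\theta_{d0},\theta_{d-1,1},\dots,\theta_{0d}$ be real numbers with $\theta_{d0}\neq0$. Let $P(\theta)$ be the $(2d-2)\times(2d-2)$ matrix defined as follows: for $k=1,\dots,d-1$ and $m=0,\dots,d-1$, the entry in row $k$, column $k+m$ is $(d-m)\theta_{d-m,m}$; the entry in row $d-1+k$, column $k+m$ is $(m+1)\theta_{d-1-m,m+1}$; all other entries are $0$. (Thus the first $d-1$ rows are successive shifts of $(d\theta_{d0},(d-1)\theta_{d-1,1},\dots,2\theta_{2,d-2},\theta_{1,d-1})$ and the last $d-1$ rows are successive shifts of $(\theta_{d-1,1},2\theta_{d-2,2},\dots,d\theta_{0d})$.) Let $p(x;\theta)=\theta_{d0}x^d+\theta_{d-1,1}x^{d-1}+\dots+\theta_{1,d-1}x+\theta_{0d}$, and let $R(p,p')$ be the determinant of the $(2d-1)\times(2d-1)$ matrix whose first $d-1$ rows are successive shifts of the coefficient row $(\theta_{d0},\theta_{d-1,1},\dots,\theta_{0d})$ of $p$ and whose last $d$ rows are successive shifts of the coefficient row $(d\theta_{d0},(d-1)\theta_{d-1,1},\dots,\theta_{1,d-1})$ of $p'$ (each shift moving one column to the right, zeros elsewhere). Define $D(\theta)=R(p,p')/\theta_{d0}$. Then $$\det P(\theta)=d^{\,d-2}D(\theta).$$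
   Context: $D(\theta)$ is (the paper's normalization of) the discriminant of the polynomial equation $p(x;\theta)=0$; $P(\theta)$ is the coefficient matrix of the linear system determining the highest-order derivatives of the bivariate normalizing constant in the Pfaffian system. *)

From mathcomp Require Import all_boot all_order all_algebra.
Set Implicit Arguments. Unset Strict Implicit. Unset Printing Implicit Defensive.
Import Order.TTheory GRing.Theory Num.Theory.
Local Open Scope ring_scope.

(* Parameters: th m := theta_{d-m,m} for m = 0..d (values for m > d are irrelevant).
   Matrices are 0-indexed: row/column k (1-based) of the paper is index k-1. *)

Definition Pmat (R : nzRingType) (d : nat) (th : nat -> R) : 'M[R]_(2 * d - 2) :=
  \matrix_(i < 2 * d - 2, j < 2 * d - 2)
    if (i < d.-1)%N then
      (if (i <= j)%N && (j - i <= d.-1)%N then (d - (j - i))%:R * th (j - i)%N else 0)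
    else
      let k := (i - d.-1)%N in
      (if (k <= j)%N && (j - k <= d.-1)%N then (j - k).+1%:R * th (j - k).+1 else 0).

Definition SylvPP' (R : nzRingType) (d : nat) (th : nat -> R) : 'M[R]_(2 * d - 1) :=
  \matrix_(i < 2 * d - 1, j < 2 * d - 1)
    if (i < d.-1)%N then
      (if (i <= j)%N && (j - i <= d)%N then th (j - i)%N else 0)
    else
      let k := (i - d.-1)%N in
      (if (k <= j)%N && (j - k <= d.-1)%N then (d - (j - k))%:R * th (j - k)%N else 0).

Definition resPP' (R : comNzRingType) (d : nat) (th : nat -> R) : R := \det (SylvPP' d th).

Definition Dtheta (R : fieldType) (d : nat) (th : nat -> R) : R := resPP' d th / th 0%N.

(* In the Sylvester matrix, replace each of the first d-1 rows (p shifted r columns) by d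
   times itself minus the row of p' with the same shift.  The new rows carry the
   coefficients [m theta_{d-m,m}] of [d p - x p'], whose leading one vanishes, and the
   determinant gets multiplied by [d^(d-1)].  Moving the d rows of p' to the top is a
   cyclic permutation of the 2d-1 rows, hence even.  The first column is then
   [(d theta_{d0}, 0, ..., 0)] and its complementary minor is exactly P(theta), so
   [d^(d-1) R(p,p') = d theta_{d0} det P(theta)]. *)

From mathcomp Require Import all_boot all_order all_algebra fingroup perm.
From mathcomp Require Import zify ring.
Import GRing.Theory Num.Theory.
Set Implicit Arguments. Unset Strict Implicit. Unset Printing Implicit Defensive.
Local Open Scope ring_scope.

Section RotationPerm.

Variable n : nat.

Definition rot_perm : 'S_n.+1 := lift_perm ord_max ord0 1.

Lemma rot_permE (x : 'I_n.+1) : val (rot_perm x) = (x.+1 %% n.+1)%N.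
Proof.
have [->|x_neq_max] := eqVneq x ord_max.
  by rewrite lift_perm_id /= modnn.
have x_lt_n : (x < n)%N by move: (ltn_ord x) x_neq_max; rewrite -val_eqE /=; lia.
have -> : x = lift ord_max (Ordinal x_lt_n).
  by apply: val_inj; rewrite /= /bump; case: leqP => /=; lia.
by rewrite lift_perm_lift perm1 /= /bump /= modn_small; lia.
Qed.

Lemma rot_permXE k (x : 'I_n.+1) : val ((rot_perm ^+ k)%g x) = ((x + k) %% n.+1)%N.
Proof.
rewrite permX; elim: k => [|k IHk] /=; first by rewrite addn0 modn_small.
by rewrite rot_permE IHk -addn1 modnDml -addnA addn1.
Qed.

Lemma odd_rot_permX k : odd_perm (rot_perm ^+ k)%g = odd k && odd n.
Proof.
elim: k => [|k IHk]; first by rewrite expg0 odd_perm1.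
rewrite expgS odd_permM IHk odd_lift_perm odd_perm1 /= addbF.
by case: (odd k); case: (odd n).
Qed.

Lemma det_row_perm_rotX (R : comNzRingType) k (A : 'M[R]_n.+1) :
  ~~ odd n -> \det (row_perm (rot_perm ^+ k)%g A) = \det A.
Proof.
move=> /negbTE n_even.
by rewrite row_permE det_mulmx det_perm odd_rot_permX n_even andbF mul1r.
Qed.

End RotationPerm.

Lemma det_fun_mx_eq (R : comNzRingType) (f : nat -> nat -> R) n1 n2 : n1 = n2 ->
  \det (\matrix_(i < n1, j < n1) f i j) = \det (\matrix_(i < n2, j < n2) f i j).
Proof. by move=> ->. Qed.

Lemma sum_nat_delta (R : nzSemiRingType) n (f : nat -> R) a : (a < n)%N ->
  \sum_(k < n) (k == a :> nat)%:R * f k = f a.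
Proof.
move=> a_lt_n; under eq_bigr do rewrite mulr_natl mulrb.
by rewrite -big_mkcond big_ord1_eq a_lt_n.
Qed.

Definition band (R : nzSemiRingType) (a : nat -> R) (s j : nat) : R :=
  if (s <= j)%N then a (j - s)%N else 0.

Section Band.

Variable R : nzRingType.
Implicit Types a b : nat -> R.

Lemma bandSS a s j : band a s.+1 j.+1 = band a s j.
Proof. by rewrite /band ltnS subSS. Qed.

Lemma band_lin (c : R) a b s j :
  c * band a s j - band b s j = band (fun m => c * a m - b m) s j.
Proof. by rewrite /band; case: ifP; rewrite ?mulr0 ?subr0. Qed.

Lemma band_drop0 a b s j :
  a 0%N = 0 -> (forall m, a m.+1 = b m) -> band a s j = band b s.+1 j.
Proof.
rewrite /band => a0 aS; have [s_lt_j|j_le_s] := ltnP s j.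
  by rewrite ltnW // -aS subnSK.
have [->|s_neq_j] := eqVneq s j; first by rewrite ?leqnn ?subnn.
by rewrite leq_eqVlt (negbTE s_neq_j) ltnNge j_le_s.
Qed.

End Band.

Section SylvesterReduction.

Variables (R : comNzRingType) (d : nat) (th : nat -> R).

(* Coefficient sequences, leading coefficient first, of [p], [p'] and [(d p - x p') / x];
   [th m] stands for [theta_{d-m,m}]. *)
Definition pcoef (m : nat) : R := if (m <= d)%N then th m else 0.
Definition dcoef (m : nat) : R := if (m <= d.-1)%N then (d - m)%:R * th m else 0.
Definition qcoef (m : nat) : R := if (m <= d.-1)%N then m.+1%:R * th m.+1 else 0.

Lemma pcoef_dcoef0 : d%:R * pcoef 0 - dcoef 0 = 0.
Proof. by rewrite /pcoef /dcoef /= subn0 subrr. Qed.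

Lemma pcoef_dcoefS m : (1 <= d)%N -> d%:R * pcoef m.+1 - dcoef m.+1 = qcoef m.
Proof.
rewrite /pcoef /dcoef /qcoef => d_gt0; case: (ltngtP m d.-1) => [m_lt|m_gt|->].
- rewrite ifT; last by lia.
  by rewrite -mulrBl -natrB ?subnBA ?addKn //; lia.
- by rewrite ifF ?mulr0 ?subr0 //; apply/negbTE; rewrite -ltnNge; lia.
- by rewrite prednK // leqnn subr0.
Qed.

Definition sylv_entry (i j : nat) : R :=
  if (i < d.-1)%N then band pcoef i j else band dcoef (i - d.-1) j.

Definition P_entry (i j : nat) : R :=
  if (i < d.-1)%N then band dcoef i j else band qcoef (i - d.-1) j.

(* The Sylvester matrix after the row operations and the row rotation: rows [0, d) are
   those of [p'], rows [d, 2d-1) those of [d p - x p']. *)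
Definition reduced_entry (i j : nat) : R :=
  if (i < d)%N then band dcoef i j else band qcoef (i - d).+1 j.

Definition rowop_entry (r k : nat) : R :=
  if (r < d.-1)%N then d%:R * (k == r)%:R - (k == r + d.-1)%N%:R else (k == r)%:R.

Hypothesis d_ge2 : (2 <= d)%N.

Variable n : nat.
Hypothesis n_def : n.+1 = (2 * d - 1)%N.

Let S := \matrix_(i < n.+1, j < n.+1) sylv_entry i j.
Let E := \matrix_(r < n.+1, k < n.+1) rowop_entry r k.

Lemma det_rowop : \det E = d%:R ^+ d.-1.
Proof.
have E_trig : is_trig_mx E^T.
  apply/is_trig_mxP => i j i_lt_j; rewrite !mxE /rowop_entry.
  have [-> ->] : (i == j :> nat) = false /\ (i == (j + d.-1)%N :> nat) = false.
    by split; apply/negbTE; lia.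
  by rewrite mulr0 subr0 if_same.
rewrite -det_tr det_trig //.
have diag (i : 'I_n.+1) : E^T i i = if (i < d.-1)%N then d%:R else 1.
  rewrite !mxE /rowop_entry eqxx; case: ifP => // _.
  by rewrite (_ : (i == (i + d.-1)%N :> nat) = false) ?mulr1 ?subr0 //; apply/negbTE; lia.
under eq_bigr do rewrite diag.
rewrite -big_mkcond /= -(big_ord_widen _ (fun=> d%:R)); last by lia.
by rewrite prodr_const card_ord.
Qed.

Lemma rowop_mulmxE r j :
  (E *m S) r j =
  if (r < d.-1)%N then d%:R * sylv_entry r j - sylv_entry (r + d.-1) j
  else sylv_entry r j.
Proof.
rewrite !mxE; under eq_bigr do rewrite !mxE.
have r_lt : (r < n.+1)%N := ltn_ord r.
rewrite /rowop_entry; case: ifP => r_lt_d1; last exact: (sum_nat_delta (sylv_entry^~ j)).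
under eq_bigr do rewrite mulrBl -mulrA.
by rewrite sumrB -mulr_sumr !(sum_nat_delta (sylv_entry^~ j)) //; lia.
Qed.

Lemma reduced_entry_rowop (i j : 'I_n.+1) :
  reduced_entry i j = (E *m S) ((rot_perm n ^+ d.-1)%g i) j.
Proof.
have i_lt := ltn_ord i.
rewrite rowop_mulmxE rot_permXE /reduced_entry /sylv_entry.
have [i_lt_d|i_ge_d] := ltnP i d.
  rewrite modn_small; last by lia.
  by rewrite !ifF ?addnK //; lia.
have -> : ((i + d.-1) %% n.+1 = i - d)%N.
  have -> : (i + d.-1 = (i - d) + n.+1)%N by lia.
  by rewrite modnDr modn_small //; lia.
rewrite ifT; last by lia.
rewrite ifT ?ifF ?addnK; try lia.
rewrite band_lin (@band_drop0 _ _ qcoef _ _ pcoef_dcoef0) // => m.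
by rewrite pcoef_dcoefS //; lia.
Qed.

Lemma reduced_entry00 : reduced_entry 0 0 = d%:R * th 0.
Proof. by rewrite /reduced_entry ifT; [rewrite /band /dcoef /= !subn0 | lia]. Qed.

Lemma reduced_entryS0 i : reduced_entry i.+1 0 = 0.
Proof. by rewrite /reduced_entry; case: ifP. Qed.

Lemma reduced_entrySS i j : reduced_entry i.+1 j.+1 = P_entry i j.
Proof.
rewrite /reduced_entry /P_entry bandSS (_ : (i.+1 < d)%N = (i < d.-1)%N); last by lia.
by case: ifP => // _; rewrite bandSS; congr band; lia.
Qed.

Lemma det_sylv_P :
  d%:R ^+ d.-1 * \det S = d%:R * th 0 * \det (\matrix_(i < n, j < n) P_entry i j).
Proof.
have n_even : ~~ odd n by rewrite (_ : n = (2 * d.-1)%N) ?oddM //; lia.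
rewrite -det_rowop -det_mulmx -(det_row_perm_rotX d.-1 _ n_even).
set T := row_perm _ _.
have T_def : T = \matrix_(i < n.+1, j < n.+1) reduced_entry i j.
  by apply/matrixP => i j; rewrite [LHS]mxE [RHS]mxE reduced_entry_rowop.
rewrite T_def (expand_det_col _ ord0) (bigD1 ord0) //= big1 ?addr0; last first.
  by move=> [[|i] ? i_neq0] //; rewrite mxE reduced_entryS0 mul0r.
rewrite mxE reduced_entry00 /cofactor /= expr0 mul1r; congr (_ * \det _).
by apply/matrixP => i j; rewrite !mxE !lift0 reduced_entrySS.
Qed.

End SylvesterReduction.

Lemma SylvPP'E (R : comNzRingType) d (th : nat -> R) :
  SylvPP' d th = \matrix_(i < 2 * d - 1, j < 2 * d - 1) sylv_entry d th i j.
Proof.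
apply/matrixP => i j; rewrite !mxE /sylv_entry /band.
by case: ifP => _; [case: (i <= j)%N | case: (i - d.-1 <= j)%N].
Qed.

Lemma PmatE (R : comNzRingType) d (th : nat -> R) :
  Pmat d th = \matrix_(i < 2 * d - 2, j < 2 * d - 2) P_entry d th i j.
Proof.
apply/matrixP => i j; rewrite !mxE /P_entry /band.
by case: ifP => _; [case: (i <= j)%N | case: (i - d.-1 <= j)%N].
Qed.

Theorem theorem6p2 (R : realFieldType) (d : nat) (th : nat -> R) :
  (2 <= d)%N -> th 0%N != 0 ->
  \det (Pmat d th) = (d%:R) ^+ (d - 2) * Dtheta d th.
Proof.
move=> d_ge2 th0_neq0.
have size_eq : (2 * d - 1 = (2 * d - 2).+1)%N by lia.
have d_neq0 : (d%:R : R) != 0 by rewrite pnatr_eq0; lia.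
apply: (mulfI (mulf_neq0 d_neq0 th0_neq0)).
rewrite PmatE -det_sylv_P ?size_eq // /Dtheta /resPP' SylvPP'E.
rewrite (det_fun_mx_eq (sylv_entry d th) size_eq).
have -> : d.-1 = (d - 2).+1 by lia.
by rewrite exprS; field.
Qed.
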